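(* Let $T$ be a tree on $n$ vertices, $q$ a positive integer and $C=(C_1,\dots,C_n)\in(\mathbb{Z}/q\mathbb{Z})^n$. Then the algorithm COMPUTE-EVAL-CSF$(T,q,C)$ described below terminates in $O(n^2(\log q)^2)$ time.
   Context: Algorithm COMPUTE-EVAL-SFS$(T,v,q,C)$, for a tree $T$ rooted at $v$: if $T$ is a single vertex, return the sequence $(1)$. Otherwise let $v_1,\dots,v_k$ be the neighbors of $v$ and $T_i$ the subtree rooted at $v_i$ (component of $T$ minus edge $\{v,v_i\}$ containing $v_i$). Initialize $r_1=1$, $r_j=0$ for $2\le j\le n$, and $d=1$. For $i=1,\dots,k$: copy $t_j\leftarrow r_j$ for $1\le j\le d$; recursively compute $(s_1,\dots,s_m)=$ COMPUTE-EVAL-SFS$(T_i,v_i,q,C)$ ($m$ = number of vertices of $T_i$); set $s_0\leftarrow C_1s_1+\dots+C_ms_m \bmod q$; replace $s_j\leftarrow -s_j$ for $1\le j\le m$; set $r_j\leftarrow0$ for $1\le j\le m+d$; for $1\le j\le d$ and $0\le p\le m$ set $r_{j+p}\leftarrow r_{j+p}+t_js_p \bmod q$; then $d\leftarrow d+m$. Return $(r_1,\dots,r_n)$. Algorithm COMPUTE-EVAL-CSF$(T,q,C)$: pick an arbitrary vertex $v$, compute $(r_1,\dots,r_n)=$ COMPUTE-EVAL-SFS$(T,v,q,C)$, and return $C_1r_1+\dots+C_nr_n \bmod q$. (This outputs the evaluation at $p_i\mapsto C_i$, modulo $q$, of the chromatic symmetric function of $T$ written as an integer polynomial in the power sums $p_1,\dots,p_n$.)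 Time is measured with arithmetic on residues mod $q$ costing $O((\log q)^2)$ per operation. *)

From mathcomp Require Import all_boot.
Set Implicit Arguments. Unset Strict Implicit. Unset Printing Implicit Defensive.

(* A tree together with a chosen root and a chosen ordering of the neighbours
   of every vertex (children = neighbours other than the parent).  This is
   exactly the data on which COMPUTE-EVAL-SFS recurses. *)
Inductive rtree : Type := Node of seq rtree.

Fixpoint rsize (t : rtree) : nat :=
  let: Node ch := t in (sumn (map rsize ch)).+1.

(* Cost model: every elementary step (arithmetic operation on residues mod q,
   assignment/copy/initialisation of a cell, update of a loop counter) is
   charged op_cost q = (bit length of q)^2, i.e. O((log q)^2).  This
   over-charges assignments, so a bound in this model is at least as strong
   as the informal one. *)
Definition bitlen (q : nat) : nat := (trunc_log 2 q).+1.
Definition op_cost (q : nat) : nat := bitlen q ^ 2.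

Definition negm (q x : nat) : nat := (q - x %% q) %% q.

(* r_{j+p} <- r_{j+p} + t_j s_p mod q, for 1<=j<=d, 0<=p<=m.
   Arrays are 0-indexed: r_j is stored at index j-1, t_j at j-1,
   s_p at index p (ss = s_0 :: s_1 :: ... :: s_m). *)
Definition mul_step (q : nat) (tt ss r : seq nat) (d m : nat) : seq nat :=
  foldl (fun r jp => let: (j, p) := jp in let k := (j + p).-1 in
           set_nth 0 r k ((nth 0 r k + nth 0 tt j.-1 * nth 0 ss p) %% q))
        r [seq (j, p) | j <- iota 1 d, p <- iota 0 m.+1].

(* COMPUTE-EVAL-SFS with instrumented running time.
   Returns ((r_1,...,r_n), time).  C j is C_j (1-indexed). *)
Fixpoint eval_sfs (q : nat) (C : nat -> nat) (t : rtree) : seq nat * nat :=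
  match t with
  | Node [::] => ([:: 1 %% q], op_cost q)
  | Node ch =>
    let n := rsize t in
    let fix loop (chs : seq rtree) (r : seq nat) (d time : nat)
        : seq nat * nat :=
      match chs with
      | [::] => (r, time)
      | c :: chs' =>
        let tt := take d r in                                  (* d copies *)
        let (s, trec) := eval_sfs q C c in
        let m := size s in
        let s0 := sumn [seq C j.+1 * nth 0 s j | j <- iota 0 m] %% q in     (* 2m ops *)
        let sneg := map (negm q) s in                          (* m ops *)
        let r1 := nseq (m + d) 0 ++ drop (m + d) r in          (* m+d ops *)
        let r2 := mul_step q tt (s0 :: sneg) r1 d m in         (* 2d(m+1) ops *)
        loop chs' r2 (d + m)                                   (* 1 op *)
             (time + trec +
              (d + 2 * m + m + (m + d) + 2 * d * m.+1 + 1) * op_cost q)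
      end in
    loop ch (1 %% q :: nseq n.-1 0) 1 ((n + 1) * op_cost q)
  end.

Definition eval_csf (q : nat) (C : nat -> nat) (t : rtree) : nat * nat :=
  let (r, time) := eval_sfs q C t in
  let n := size r in
  (sumn [seq C j.+1 * nth 0 r j | j <- iota 0 n] %% q,
   time + (2 * n + 1) * op_cost q).

Definition coeffs (n q : nat) (C : 'I_n -> 'I_q) (j : nat) : nat :=
  match insub j.-1 with Some i => nat_of_ord (C i) | None => 0 end.

Definition csf_time (n q : nat) (C : 'I_n -> 'I_q) (T : rtree) : nat :=
  (eval_csf q (coeffs C) T).2.

From mathcomp Require Import all_boot.
From mathcomp Require Import zify.
From Stdlib Require Import List (Forall, Forall_nil, Forall_cons, Forall_cons_iff).

(* Merging a child subtree with m vertices into a partial result on d vertices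
   costs at most 11 d m operations.  For the children m_1, ..., m_k of a vertex,
   merged with d_i = 1 + m_1 + ... + m_(i-1), the merge costs add up to at most
   11 (S + sum_(j < i) m_j m_i) with S = sum_i m_i, and together with the
   recursive costs 11 m_i^2 they stay below 11 (1 + S)^2: the bound
   T(n) <= 11 n^2 op_cost q is preserved by the recursion. *)

Fixpoint rtree_forall_ind (P : rtree -> Prop)
    (IH : forall ch, Forall P ch -> P (Node ch)) (t : rtree) : P t :=
  let: Node ch := t in
  IH ch ((fix all_ind ch := match ch return Forall P ch with
                            | [::] => Forall_nil P
                            | c :: ch' =>
                              Forall_cons c (rtree_forall_ind P IH c) (all_ind ch')
                            end) ch).

Lemma rsize_gt0 (t : rtree) : 0 < rsize t.
Proof. by case: t. Qed.

Lemma size_mul_step q tt ss r d m :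
  d + m <= size r -> size (mul_step q tt ss r d m) = size r.
Proof.
rewrite /mul_step => le_dm_r.
set l := [seq _ | _ <- _, _ <- _].
have : all (fun jp => (jp.1 + jp.2).-1 < size r) l.
  apply/allP => -[a b] /allpairsPdep [j [p [+ + [-> ->]]]] /=.
  by rewrite !mem_iota; lia.
elim: l r {le_dm_r} => [|[j p] l IHl] r //= /andP [lt_jp lt_l].
have /maxn_idPr size_r := lt_jp.
by rewrite IHl size_set_nth size_r.
Qed.

Definition merge_cost (d m : nat) : nat :=
  d + 2 * m + m + (m + d) + 2 * d * m.+1 + 1.

Lemma merge_cost_le d m : 0 < d -> 0 < m -> merge_cost d m <= 11 * d * m.
Proof. rewrite /merge_cost; nia. Qed.

Section EvalSfs.

Variables (q : nat) (C : nat -> nat).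

Local Notation K := (op_cost q).

(* The local [fix] of [eval_sfs], lifted to the top level so that it can be
   reasoned about; [eval_sfs_cons] holds by conversion. *)
Fixpoint sfs_loop (chs : seq rtree) (r : seq nat) (d time : nat)
    : seq nat * nat :=
  match chs with
  | [::] => (r, time)
  | c :: chs' =>
    let tt := take d r in
    let (s, trec) := eval_sfs q C c in
    let m := size s in
    let s0 := sumn [seq C j.+1 * nth 0 s j | j <- iota 0 m] %% q in
    let r1 := nseq (m + d) 0 ++ drop (m + d) r in
    let r2 := mul_step q tt (s0 :: map (negm q) s) r1 d m in
    sfs_loop chs' r2 (d + m) (time + trec + merge_cost d m * K)
  end.

Lemma eval_sfs_cons c ch (n := rsize (Node (c :: ch))) :
  eval_sfs q C (Node (c :: ch)) =
  sfs_loop (c :: ch) (1 %% q :: nseq n.-1 0) 1 ((n + 1) * K).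
Proof. by []. Qed.

Lemma size_sfs_loop chs r d time :
  Forall (fun c => size (eval_sfs q C c).1 = rsize c) chs ->
  d + sumn (map rsize chs) <= size r ->
  size (sfs_loop chs r d time).1 = size r.
Proof.
elim: chs r d time => [|c chs IHchs] r d time //=.
move=> /Forall_cons_iff [size_c size_chs] le_size.
case: (eval_sfs q C c) size_c => s trec /= ->.
have size_r1 : size (nseq (rsize c + d) 0 ++ drop (rsize c + d) r) = size r.
  by rewrite size_cat size_nseq size_drop; lia.
rewrite IHchs // size_mul_step size_r1 //; lia.
Qed.

Lemma size_eval_sfs t : size (eval_sfs q C t).1 = rsize t.
Proof.
elim/rtree_forall_ind: t => -[|c ch] // size_ch.
by rewrite eval_sfs_cons size_sfs_loop //= size_nseq.
Qed.

Lemma sfs_loop_time chs r d time :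
  0 < d ->
  Forall (fun c => (eval_sfs q C c).2 <= 11 * rsize c ^ 2 * K) chs ->
  (sfs_loop chs r d time).2 <=
    time + 11 * K * (d * sumn (map rsize chs) + sumn (map rsize chs) ^ 2).
Proof.
elim: chs r d time => [|c chs IHchs] r d time d_gt0 /=; first lia.
move=> /Forall_cons_iff [time_c time_chs].
have := size_eval_sfs c; have := rsize_gt0 c.
case: (eval_sfs q C c) time_c => s trec /= time_c m_gt0 ->.
set m := rsize c in time_c m_gt0 *; set S := sumn (map rsize chs).
apply: leq_trans (IHchs _ _ _ (ltn_addr _ d_gt0) time_chs) _.
have := leq_mul (merge_cost_le _ _ d_gt0 m_gt0) (leqnn K).
nia.
Qed.

Lemma eval_sfs_time t : (eval_sfs q C t).2 <= 11 * rsize t ^ 2 * K.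
Proof.
elim/rtree_forall_ind: t => -[|c ch] time_ch; first by rewrite /=; lia.
rewrite eval_sfs_cons.
apply: leq_trans (sfs_loop_time _ _ _ _ (ltn0Sn 0) time_ch) _.
rewrite /=; nia.
Qed.

End EvalSfs.

Theorem lemma3p9 :
  exists c : nat, forall (n q : nat) (T : rtree) (C : 'I_n -> 'I_q),
    rsize T = n -> 0 < q ->
    csf_time C T <= c * n ^ 2 * (trunc_log 2 q).+1 ^ 2.
Proof.
exists 14 => n q T C size_T _.
rewrite /csf_time /eval_csf.
have := eval_sfs_time q (coeffs C) T; have := size_eval_sfs q (coeffs C) T.
have := rsize_gt0 T.
case: (eval_sfs q (coeffs C) T) => r t /=; rewrite size_T => n_gt0 -> time_T.
rewrite -[(trunc_log 2 q).+1 ^ 2]/(op_cost q).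
have : 2 * n + 1 <= 3 * n ^ 2 by nia.
nia.
Qed.
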